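(* Let $f$ be a homeomorphism of a compact metric space $(X,d^X)$. If $x\in X$ is a minimally expansive point of $f$ which is also a shadowable point of $f$, then $x$ is a topologically stable point of $f$ and a GH-stable point of $f$.
   Context: $B(x,\epsilon)$ is the open ball, $\mathcal{O}_f(x)=\{f^n(x):n\in\mathbb{Z}\}$. $f$ is expansive on $A\subset X$ with constant $\mathfrak{c}$ if for all distinct $a,b\in A$ there is $n\in\mathbb{Z}$ with $d(f^n(a),f^n(b))>\mathfrak{c}$. $x$ is minimally expansive for $f$ if there is $\mathfrak{c}>0$ such that for each $y\in B(x,\mathfrak{c})$, $f$ is expansive on $\overline{\mathcal{O}_f(y)}$ with constant $\mathfrak{c}$. A $\delta$-pseudo orbit for $f$ through $x$ is a sequence $\{x_n\}_{n\in\mathbb{Z}}$ with $x_0=x$ and $d(f(x_n),x_{n+1})<\delta$ for all $n$; it is $\epsilon$-traced if there is $y$ with $d(f^n(y),x_n)<\epsilon$ for all $n\in\mathbb{Z}$. $x$ is a shadowable point of $f$ if for every $\epsilon>0$ there is $\delta>0$ such that every $\delta$-pseudo orbit for $f$ through $x$ is $\epsilon$-traced by some point of $X$. For maps $f,\bar f:X\to Y$, $d_{C^0}(f,\bar f)=\sup_{x}d^Y(f(x),\bar f(x))$. $x$ is a topologically stable point of $f$ if for every $\epsilon>0$ there is $\delta>0$ such that for every homeomorphism $g$ of $X$ with $d_{C^0}(f,g)\le\delta$ there is a continuous $h:\overline{\mathcal{O}_g(x)}\to X$ with $f\circ h=h\circ g$ and $d(h(z),z)\le\epsilon$ for all $z\in\overline{\mathcal{O}_g(x)}$.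 For $A,B\subset X$, $d^X(A,B)=\inf\{d^X(a,b):a\in A,b\in B\}$ and the Hausdorff distance is $d^X_H(A,B)=\max\{\sup_{a\in A}d^X(a,B),\sup_{b\in B}d^X(A,b)\}$. For compact metric spaces $(X,d^X),(Y,d^Y)$ and $\delta>0$, a map $i:X\to Y$ (not necessarily continuous) is a $\delta$-isometry if $\max\{d^Y_H(i(X),Y),\sup_{x,x'\in X}|d^Y(i(x),i(x'))-d^X(x,x')|\}<\delta$. For homeomorphisms $f$ of $X$ and $g$ of $Y$, $d_{GH^0}(f,g)=\inf\{\delta>0:$ there exist $\delta$-isometries $i:X\to Y$, $j:Y\to X$ with $d_{C^0}(g\circ i,i\circ f)<\delta$ and $d_{C^0}(j\circ g,f\circ j)<\delta\}$. $x$ is a GH-stable point of $f$ if for every $\epsilon>0$ there is $\delta>0$ such that for every compact metric space $(Y,d^Y)$ and every homeomorphism $g$ of $Y$ with $d_{GH^0}(f,g)<\delta$, there is an $\epsilon$-isometry $j:Y\to X$ such that for each $y\in j^{-1}(x)$ there is a continuous $h:\overline{\mathcal{O}_g(y)}\to X$ with $d^X(h(z),j(z))<\epsilon$ for all $z\in\overline{\mathcal{O}_g(y)}$ and $f\circ h=h\circ g$. *)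

From Stdlib Require Import Reals ZArith List.
Open Scope R_scope.

Record MetricSpace := {
  carrier :> Type;
  dist : carrier -> carrier -> R;
  dist_nonneg : forall x y, 0 <= dist x y;
  dist_sym : forall x y, dist x y = dist y x;
  dist_tri : forall x y z, dist x z <= dist x y + dist y z;
  dist_eq0 : forall x y, dist x y = 0 <-> x = y
}.
Arguments dist {m}.

Section Metric.
Variable X : MetricSpace.

Definition ball (x : X) (eps : R) : X -> Prop := fun y => dist x y < eps.

Definition is_open (U : X -> Prop) : Prop :=
  forall x, U x -> exists e, 0 < e /\ forall y, dist x y < e -> U y.

Definition compact_space : Prop :=
  forall (I : Type) (U : I -> X -> Prop),
    (forall i, is_open (U i)) -> (forall x, exists i, U i x) ->
    exists l : list I, forall x, exists i, In i l /\ U i x.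

Definition closure (A : X -> Prop) : X -> Prop :=
  fun z => forall eps, 0 < eps -> exists a, A a /\ dist z a < eps.

End Metric.
Arguments ball {X}.
Arguments closure {X}.

Definition continuous_on {X Y : MetricSpace} (S : X -> Prop) (h : X -> Y) : Prop :=
  forall z, S z -> forall eps, 0 < eps -> exists del, 0 < del /\
    forall w, S w -> dist z w < del -> dist (h z) (h w) < eps.

Definition continuous_map {X Y : MetricSpace} (h : X -> Y) : Prop :=
  continuous_on (fun _ => True) h.

Record Homeo (X : MetricSpace) := {
  hfun :> X -> X;
  hinv : X -> X;
  hfun_cont : continuous_map hfun;
  hinv_cont : continuous_map hinv;
  hinv_l : forall x, hinv (hfun x) = x;
  hinv_r : forall x, hfun (hinv x) = x
}.
Arguments hinv {X}.

Definition iterZ {X : MetricSpace} (f : Homeo X) (n : Z) : X -> X :=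
  match n with
  | Z0 => fun x => x
  | Zpos p => Nat.iter (Pos.to_nat p) (hfun X f)
  | Zneg p => Nat.iter (Pos.to_nat p) (hinv f)
  end.

Definition orbit {X : MetricSpace} (f : Homeo X) (x : X) : X -> Prop :=
  fun y => exists n : Z, y = iterZ f n x.

Definition expansive_on {X : MetricSpace} (f : Homeo X) (A : X -> Prop) (c : R) : Prop :=
  forall a b, A a -> A b -> a <> b -> exists n : Z, dist (iterZ f n a) (iterZ f n b) > c.

Definition minimally_expansive {X : MetricSpace} (f : Homeo X) (x : X) : Prop :=
  exists c, 0 < c /\ forall y, ball x c y -> expansive_on f (closure (orbit f y)) c.

Definition pseudo_orbit {X : MetricSpace} (f : Homeo X) (del : R) (x : X) (xs : Z -> X) : Prop :=
  xs 0%Z = x /\ forall n : Z, dist (f (xs n)) (xs (n + 1)%Z) < del.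

Definition traced {X : MetricSpace} (f : Homeo X) (eps : R) (xs : Z -> X) : Prop :=
  exists y, forall n : Z, dist (iterZ f n y) (xs n) < eps.

Definition shadowable {X : MetricSpace} (f : Homeo X) (x : X) : Prop :=
  forall eps, 0 < eps -> exists del, 0 < del /\
    forall xs, pseudo_orbit f del x xs -> traced f eps xs.

Definition dC0_le {X Y : MetricSpace} (f g : X -> Y) (del : R) : Prop :=
  forall x, dist (f x) (g x) <= del.

Definition topologically_stable {X : MetricSpace} (f : Homeo X) (x : X) : Prop :=
  forall eps, 0 < eps -> exists del, 0 < del /\
    forall g : Homeo X, dC0_le f g del ->
      exists h : X -> X,
        continuous_on (closure (orbit g x)) h /\
        (forall z, closure (orbit g x) z -> f (h z) = h (g z)) /\
        (forall z, closure (orbit g x) z -> dist (h z) z <= eps).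

Definition is_glb (A : R -> Prop) (s : R) : Prop :=
  (forall y, A y -> s <= y) /\ (forall t, (forall y, A y -> t <= y) -> t <= s).

Definition sup_lt (A : R -> Prop) (del : R) : Prop :=
  exists s, is_lub A s /\ s < del.

Definition dist_pt_set {X : MetricSpace} (a : X) (B : X -> Prop) (r : R) : Prop :=
  is_glb (fun v => exists b, B b /\ v = dist a b) r.

Definition is_hausdorff {X : MetricSpace} (A B : X -> Prop) (h : R) : Prop :=
  exists s1 s2,
    is_lub (fun r => exists a, A a /\ dist_pt_set a B r) s1 /\
    is_lub (fun r => exists b, B b /\ dist_pt_set b A r) s2 /\
    h = Rmax s1 s2.

Definition is_isometry_approx {X Y : MetricSpace} (i : X -> Y) (del : R) : Prop :=
  exists h s,
    is_hausdorff (fun y => exists x, y = i x) (fun _ => True) h /\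
    is_lub (fun v => exists x x', v = Rabs (dist (i x) (i x') - dist x x')) s /\
    Rmax h s < del.

Definition dC0_lt {X Y : MetricSpace} (u v : X -> Y) (del : R) : Prop :=
  sup_lt (fun r => exists x, r = dist (u x) (v x)) del.

Definition GH0_admissible {X Y : MetricSpace} (f : Homeo X) (g : Homeo Y) (del : R) : Prop :=
  0 < del /\ exists (i : X -> Y) (j : Y -> X),
    is_isometry_approx i del /\ is_isometry_approx j del /\
    dC0_lt (fun x => g (i x)) (fun x => i (f x)) del /\
    dC0_lt (fun y => j (g y)) (fun y => f (j y)) del.

(* d_{GH^0}(f,g) < del : the infimum of the admissible set is < del,
   which (by definition of infimum) means some admissible value is < del *)
Definition dGH0_lt {X Y : MetricSpace} (f : Homeo X) (g : Homeo Y) (del : R) : Prop :=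
  exists del', GH0_admissible f g del' /\ del' < del.

Definition GH_stable {X : MetricSpace} (f : Homeo X) (x : X) : Prop :=
  forall eps, 0 < eps -> exists del, 0 < del /\
    forall (Y : MetricSpace) (g : Homeo Y), compact_space Y -> dGH0_lt f g del ->
      exists j : Y -> X, is_isometry_approx j eps /\
        forall y, j y = x ->
          exists h : Y -> X,
            continuous_on (closure (orbit g y)) h /\
            (forall z, closure (orbit g y) z -> dist (h z) (j z) < eps) /\
            (forall z, closure (orbit g y) z -> f (h z) = h (g z)).

(* Let g be close to f, either in C^0 (take j the identity) or in the GH^0 sense
   through an approximate isometry j : Y -> X, and let j y = x.  Then
   n |-> j (g^n y) is a pseudo orbit of f through x, hence it is traced by the
   f-orbit of some point p.  Since p lies near x, f is expansive with constant c
   on the closure of the orbit of p.  For every z in the closure of the g-orbit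
   of y, a compactness argument produces a point h z in the closure of the
   f-orbit of p whose whole f-orbit stays near the image under j of the g-orbit
   of z, and expansivity makes this point unique.  Uniqueness yields both the
   conjugacy f o h = h o g and, through a second compactness argument, the
   continuity of h. *)
From Stdlib Require Import Reals ZArith List Lra Lia Classical ClassicalEpsilon.
Open Scope R_scope.

Section Iterates.
Variables (X : MetricSpace) (f : Homeo X).

Lemma iterZ_of_nat k x : iterZ f (Z.of_nat k) x = Nat.iter k (hfun X f) x.
Proof. destruct k; simpl; [reflexivity|]. now rewrite SuccNat2Pos.id_succ. Qed.

Lemma iterZ_opp_of_nat k x : iterZ f (- Z.of_nat k) x = Nat.iter k (hinv f) x.
Proof. destruct k; simpl; [reflexivity|]. now rewrite SuccNat2Pos.id_succ. Qed.

Lemma iterZ_succ n x : iterZ f (n + 1) x = f (iterZ f n x).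
Proof.
  destruct (Z_le_gt_dec 0 n) as [Hn | Hn].
  - replace n with (Z.of_nat (Z.to_nat n)) by lia.
    replace (Z.of_nat (Z.to_nat n) + 1)%Z with (Z.of_nat (S (Z.to_nat n))) by lia.
    now rewrite !iterZ_of_nat.
  - set (k := Z.to_nat (- n - 1)).
    replace n with (- Z.of_nat (S k))%Z by lia.
    replace (- Z.of_nat (S k) + 1)%Z with (- Z.of_nat k)%Z by lia.
    rewrite !iterZ_opp_of_nat. simpl. now rewrite hinv_r.
Qed.

Lemma iterZ_pred n x : iterZ f (n - 1) x = hinv f (iterZ f n x).
Proof.
  replace n with ((n - 1) + 1)%Z at 2 by lia.
  now rewrite iterZ_succ, hinv_l.
Qed.

Lemma iterZ_add m n x : iterZ f (m + n) x = iterZ f m (iterZ f n x).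
Proof.
  induction m as [| m IHm | m IHm] using Z.peano_ind.
  - reflexivity.
  - replace (Z.succ m + n)%Z with ((m + n) + 1)%Z by lia.
    now rewrite <- Z.add_1_r, !iterZ_succ, IHm.
  - replace (Z.pred m + n)%Z with ((m + n) - 1)%Z by lia.
    now rewrite <- Z.sub_1_r, !iterZ_pred, IHm.
Qed.

Lemma iterZ_shift m x : iterZ f m (f x) = iterZ f (m + 1) x.
Proof. now rewrite iterZ_add. Qed.

End Iterates.

Lemma continuous_map_comp {X Y Z : MetricSpace} (h1 : X -> Y) (h2 : Y -> Z) :
  continuous_map h1 -> continuous_map h2 -> continuous_map (fun x => h2 (h1 x)).
Proof.
  intros C1 C2 z _ e He.
  destruct (C2 (h1 z) I e He) as [d1 [Hd1 H1]].
  destruct (C1 z I d1 Hd1) as [d2 [Hd2 H2]].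
  exists d2; split; auto.
Qed.

Lemma continuous_map_ext {X Y : MetricSpace} (h1 h2 : X -> Y) :
  (forall x, h1 x = h2 x) -> continuous_map h1 -> continuous_map h2.
Proof.
  intros E C z _ e He. destruct (C z I e He) as [d [Hd H]].
  exists d; split; auto. intros w _ Hw. rewrite <- !E. auto.
Qed.

Lemma iterZ_continuous {X : MetricSpace} (f : Homeo X) m : continuous_map (iterZ f m).
Proof.
  induction m as [| m IHm | m IHm] using Z.peano_ind.
  - intros z _ e He. exists e; split; auto.
  - apply (continuous_map_ext (fun x => f (iterZ f m x))).
    + intro x. now rewrite <- Z.add_1_r, iterZ_succ.
    + apply continuous_map_comp; auto. apply hfun_cont.
  - apply (continuous_map_ext (fun x => hinv f (iterZ f m x))).
    + intro x. now rewrite <- Z.sub_1_r, iterZ_pred.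
    + apply continuous_map_comp; auto. apply hinv_cont.
Qed.

Lemma inv_INR_S_pos k : 0 < / INR (S k).
Proof. apply Rinv_0_lt_compat, lt_0_INR; lia. Qed.

Section Sequences.
Variable X : MetricSpace.

Definition converges_to (u : nat -> X) (z : X) : Prop :=
  forall eta, 0 < eta -> exists N, forall k, (N <= k)%nat -> dist z (u k) < eta.

Definition cluster_point (u : nat -> X) (w : X) : Prop :=
  forall eta, 0 < eta -> forall N, exists k, (N <= k)%nat /\ dist (u k) w < eta.

Lemma converging_choice (P : nat -> X -> Prop) z :
  (forall k, exists a, P k a /\ dist z a < / INR (S k)) ->
  exists u, (forall k, P k (u k)) /\ converges_to u z.
Proof.
  intros H. destruct (choice _ H) as [u Hu].
  exists u. split; [intro k; apply Hu|].
  intros eta Heta. destruct (archimed_cor1 eta Heta) as [N [HN HN0]].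
  exists N. intros k Hk. apply (Rlt_le_trans _ (/ INR (S k))); [apply Hu|].
  apply Rlt_le, (Rle_lt_trans _ (/ INR N)); auto.
  apply Rinv_le_contravar; [apply lt_0_INR; lia | apply le_INR; lia].
Qed.

Lemma closure_converging_seq (A : X -> Prop) z :
  closure A z -> exists u, (forall k, A (u k)) /\ converges_to u z.
Proof.
  intro Hz. apply (converging_choice (fun _ => A)).
  intro k. exact (Hz _ (inv_INR_S_pos k)).
Qed.

Lemma closure_cluster_point (A : X -> Prop) u w :
  (forall k, closure A (u k)) -> cluster_point u w -> closure A w.
Proof.
  intros Hu Hw eta Heta.
  destruct (Hw (eta / 2) ltac:(lra) 0%nat) as [k [_ Hk]].
  destruct (Hu k (eta / 2) ltac:(lra)) as [a [Ha Hda]].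
  exists a. split; auto.
  pose proof (dist_tri X w (u k) a). rewrite dist_sym in Hk. lra.
Qed.

(* Were there no cluster point, every point would have a neighbourhood visited
   only finitely often; a finite subcover then bounds all visiting times. *)
Lemma compact_cluster_point :
  compact_space X -> forall u : nat -> X, exists w, cluster_point u w.
Proof.
  intros HC u. apply NNPP. intro Hn.
  assert (Hfar : forall w, exists rN : R * nat, 0 < fst rN /\
     forall k, (snd rN <= k)%nat -> fst rN <= dist (u k) w).
  { intro w. apply NNPP. intro H1. apply Hn. exists w. intros eta Heta N.
    apply NNPP. intro H2. apply H1. exists (eta, N). split; auto.
    intros k Hk. apply Rnot_lt_le. intro H3. apply H2. exists k. auto. }
  destruct (choice _ Hfar) as [G HG].
  destruct (HC X (fun w y => dist w y < fst (G w))) as [l Hl].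
  - intros w y Hy. exists (fst (G w) - dist w y). split; [lra|].
    intros y' Hy'. pose proof (dist_tri X w y y'). lra.
  - intro w. exists w. replace (dist w w) with 0; [apply HG|].
    symmetry. now apply dist_eq0.
  - set (M := list_max (map (fun w => snd (G w)) l)).
    destruct (Hl (u M)) as [w [Hw Hd]].
    assert (HwM : (snd (G w) <= M)%nat).
    { assert (HF : Forall (fun k => (k <= M)%nat) (map (fun w => snd (G w)) l))
        by (apply list_max_le; unfold M; lia).
      rewrite Forall_forall in HF. apply HF, (in_map (fun w => snd (G w))), Hw. }
    pose proof (proj2 (HG w) M HwM). rewrite dist_sym in Hd. lra.
Qed.

End Sequences.
Arguments converges_to {X}.
Arguments cluster_point {X}.

Lemma orbit_in_closure {X : MetricSpace} (f : Homeo X) p n :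
  closure (orbit f p) (iterZ f n p).
Proof.
  intros eta Heta. exists (iterZ f n p). split; [now exists n|].
  replace (dist _ _) with 0; auto. symmetry; now apply dist_eq0.
Qed.

Lemma closure_orbit_invariant {X : MetricSpace} (f : Homeo X) p z :
  closure (orbit f p) z -> closure (orbit f p) (f z).
Proof.
  intros Hz eta Heta.
  destruct (hfun_cont X f z I eta Heta) as [d [Hd H]].
  destruct (Hz d Hd) as [a [[n ->] Ha]].
  exists (f (iterZ f n p)). split.
  - exists (n + 1)%Z. now rewrite iterZ_succ.
  - apply H; auto.
Qed.

Lemma expansive_on_eq {X : MetricSpace} (f : Homeo X) (C : X -> Prop) c a b :
  expansive_on f C c -> C a -> C b ->
  (forall m, dist (iterZ f m a) (iterZ f m b) <= c) -> a = b.
Proof.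
  intros He Ha Hb Hm. apply NNPP. intro Hne.
  destruct (He a b Ha Hb Hne) as [n Hn]. specialize (Hm n). lra.
Qed.

Definition tracks {X Y : MetricSpace} (f : Homeo X) (g : Homeo Y) (J : Y -> X)
  (K : R) (w : X) (z : Y) : Prop :=
  forall m, dist (iterZ f m w) (J (iterZ g m z)) <= K.

Section Tracking.
Variables (X Y : MetricSpace) (f : Homeo X) (g : Homeo Y) (J : Y -> X) (d' : R).

Lemma tracks_shift K w z : tracks f g J K w z -> tracks f g J K (f w) (g z).
Proof. intros H m. rewrite !iterZ_shift. apply H. Qed.

Lemma tracks_unique (C : X -> Prop) c K1 K2 a b z :
  expansive_on f C c -> C a -> C b -> K1 + K2 <= c ->
  tracks f g J K1 a z -> tracks f g J K2 b z -> a = b.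
Proof.
  intros Hexp Ha Hb HK H1 H2. apply (expansive_on_eq f C c a b Hexp Ha Hb).
  intro m. specialize (H1 m). specialize (H2 m).
  pose proof (dist_tri X (iterZ f m a) (J (iterZ g m z)) (iterZ f m b)).
  rewrite (dist_sym X (J _)) in H. lra.
Qed.

Hypothesis J_dist : forall a b, dist (J a) (J b) <= dist a b + d'.

(* J need not be continuous: passing to the limit costs the defect d'. *)
Lemma tracks_limit K zs z ws w :
  converges_to zs z -> cluster_point ws w ->
  (forall k, tracks f g J K (ws k) (zs k)) -> tracks f g J (K + d') w z.
Proof.
  intros Hz Hw Htr m. apply Rnot_lt_le. intro Hlt.
  set (gam := dist (iterZ f m w) (J (iterZ g m z)) - (K + d')).
  assert (Hg : 0 < gam / 3) by (unfold gam; lra).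
  destruct (iterZ_continuous f m w I _ Hg) as [r1 [Hr1 H1]].
  destruct (iterZ_continuous g m z I _ Hg) as [r2 [Hr2 H2]].
  destruct (Hz r2 Hr2) as [N HN].
  destruct (Hw r1 Hr1 N) as [k [Hk Hwk]].
  assert (E1 : dist (iterZ f m w) (iterZ f m (ws k)) < gam / 3).
  { apply H1; auto. now rewrite dist_sym. }
  assert (E2 : dist (iterZ g m z) (iterZ g m (zs k)) < gam / 3) by auto.
  pose proof (Htr k m) as E3.
  pose proof (J_dist (iterZ g m (zs k)) (iterZ g m z)) as E4.
  rewrite (dist_sym Y (iterZ g m (zs k))) in E4.
  pose proof (dist_tri X (iterZ f m w) (iterZ f m (ws k)) (J (iterZ g m z))).
  pose proof (dist_tri X (iterZ f m (ws k)) (J (iterZ g m (zs k))) (J (iterZ g m z))).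
  unfold gam in *. lra.
Qed.

Hypothesis X_compact : compact_space X.
Variables (y0 : Y) (p : X) (c eps : R).
Hypothesis f_expansive : expansive_on f (closure (orbit f p)) c.
Hypothesis p_traces : forall n, dist (iterZ f n p) (J (iterZ g n y0)) < eps.

Lemma tracking_point_exists z :
  closure (orbit g y0) z ->
  exists w, closure (orbit f p) w /\ tracks f g J (eps + d') w z.
Proof.
  intro Hz. destruct (closure_converging_seq Y _ z Hz) as [u [Hu Hconv]].
  destruct (choice _ Hu) as [n Hn].
  destruct (compact_cluster_point X X_compact (fun k => iterZ f (n k) p)) as [w Hw].
  exists w. split.
  - apply (closure_cluster_point X _ (fun k => iterZ f (n k) p) w); auto.
    intro k. apply orbit_in_closure.
  - apply (tracks_limit eps u z (fun k => iterZ f (n k) p)); auto.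
    intros k m. rewrite Hn, <- !iterZ_add. left. apply p_traces.
Qed.

Lemma tracking_map_continuous (h : Y -> X) K :
  K + d' + K <= c ->
  (forall z, closure (orbit g y0) z ->
     closure (orbit f p) (h z) /\ tracks f g J K (h z) z) ->
  continuous_on (closure (orbit g y0)) h.
Proof.
  intros HK Hh z Hz eta Heta. apply NNPP. intro Hn.
  assert (Hfar : forall k, exists z', (closure (orbit g y0) z' /\
                   eta <= dist (h z) (h z')) /\ dist z z' < / INR (S k)).
  { intro k. apply NNPP. intro H1. apply Hn. exists (/ INR (S k)).
    split; [apply inv_INR_S_pos|]. intros w Hw Hdw. apply Rnot_le_lt. intro H2.
    apply H1. exists w. auto. }
  destruct (converging_choice Y _ z Hfar) as [zs [Hzs Hconv]].
  destruct (compact_cluster_point X X_compact (fun k => h (zs k))) as [w Hw].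
  assert (HwC : closure (orbit f p) w).
  { apply (closure_cluster_point X _ (fun k => h (zs k)) w); auto.
    intro k. apply Hh, Hzs. }
  assert (Hwz : w = h z).
  { apply (tracks_unique _ c (K + d') K w (h z) z f_expansive HwC); auto;
      try apply Hh; auto.
    apply (tracks_limit K zs z (fun k => h (zs k))); auto.
    intro k. apply Hh, Hzs. }
  subst w. destruct (Hw eta Heta 0%nat) as [k [_ Hk]].
  destruct (Hzs k) as [_ Hk']. rewrite dist_sym in Hk. lra.
Qed.

Lemma tracking_semiconjugacy :
  0 <= d' -> 2 * (eps + d') + d' <= c ->
  exists h : Y -> X,
    continuous_on (closure (orbit g y0)) h /\
    (forall z, closure (orbit g y0) z -> f (h z) = h (g z)) /\
    (forall z, closure (orbit g y0) z -> dist (h z) (J z) <= eps + d').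
Proof.
  intros Hd Hc.
  set (K := eps + d').
  assert (Hex : forall z, exists w, closure (orbit g y0) z ->
            closure (orbit f p) w /\ tracks f g J K w z).
  { intro z. destruct (classic (closure (orbit g y0) z)) as [Hz | Hz].
    - destruct (tracking_point_exists z Hz) as [w Hw]. now exists w.
    - exists p. tauto. }
  destruct (choice _ Hex) as [h Hh].
  exists h. split; [|split].
  - apply (tracking_map_continuous h K); auto. unfold K; lra.
  - intros z Hz.
    assert (Hgz : closure (orbit g y0) (g z)) by now apply closure_orbit_invariant.
    destruct (Hh z Hz) as [HC1 Hb1].
    apply (tracks_unique _ c K K _ _ (g z) f_expansive); try apply Hh; auto.
    + now apply closure_orbit_invariant.
    + unfold K; lra.
    + now apply tracks_shift.
  - intros z Hz. apply ((proj2 (Hh z Hz)) 0%Z).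
Qed.

End Tracking.

Lemma pseudo_orbit_of_almost_intertwining {X Y : MetricSpace} (f : Homeo X) (g : Homeo Y)
  (J : Y -> X) del y :
  (forall w, dist (f (J w)) (J (g w)) < del) ->
  pseudo_orbit f del (J y) (fun n => J (iterZ g n y)).
Proof. intro H. split; [reflexivity|]. intro n. rewrite iterZ_succ. apply H. Qed.

Lemma semiconjugacy_of_shadowing {X Y : MetricSpace} (f : Homeo X) (g : Homeo Y)
  (J : Y -> X) (x : X) (y : Y) (c e d' del : R) :
  compact_space X ->
  (forall p, ball x c p -> expansive_on f (closure (orbit f p)) c) ->
  (forall xs, pseudo_orbit f del x xs -> traced f e xs) ->
  0 <= d' -> 2 * (e + d') + d' <= c ->
  (forall a b, dist (J a) (J b) <= dist a b + d') ->
  (forall w, dist (f (J w)) (J (g w)) < del) -> J y = x ->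
  exists h : Y -> X,
    continuous_on (closure (orbit g y)) h /\
    (forall z, closure (orbit g y) z -> f (h z) = h (g z)) /\
    (forall z, closure (orbit g y) z -> dist (h z) (J z) <= e + d').
Proof.
  intros HX Hme Hsh Hd Hc HJ Hnear Hy.
  destruct (Hsh (fun n => J (iterZ g n y))) as [p Hp].
  { rewrite <- Hy. now apply pseudo_orbit_of_almost_intertwining. }
  apply (tracking_semiconjugacy X Y f g J d' HJ HX y p c e); auto.
  apply Hme. unfold ball. specialize (Hp 0%Z). simpl in Hp. rewrite Hy in Hp.
  pose proof (dist_nonneg X p x). rewrite dist_sym. lra.
Qed.

Lemma dC0_lt_pointwise {X Y : MetricSpace} (u v : X -> Y) del :
  dC0_lt u v del -> forall x, dist (u x) (v x) < del.
Proof.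
  intros [s [[Hub _] Hs]] x.
  assert (dist (u x) (v x) <= s) by (apply Hub; eauto). lra.
Qed.

Lemma isometry_approx_dist_le {X Y : MetricSpace} (i : X -> Y) del :
  is_isometry_approx i del -> forall a b, dist (i a) (i b) <= dist a b + del.
Proof.
  intros [hd [s [_ [[Hub _] Hmax]]]] a b.
  assert (Rabs (dist (i a) (i b) - dist a b) <= s) by (apply Hub; eauto).
  pose proof (Rle_abs (dist (i a) (i b) - dist a b)).
  pose proof (Rmax_r hd s). lra.
Qed.

Lemma isometry_approx_mono {X Y : MetricSpace} (i : X -> Y) del del' :
  is_isometry_approx i del -> del <= del' -> is_isometry_approx i del'.
Proof. intros [hd [s [Hh [Hs Hmax]]]] Hle. exists hd, s. split; [|split]; auto; lra. Qed.

Lemma minimally_expansive_shadowable_topologically_stable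
  {X : MetricSpace} (f : Homeo X) (x : X) (c : R) :
  compact_space X -> 0 < c ->
  (forall p, ball x c p -> expansive_on f (closure (orbit f p)) c) ->
  shadowable f x -> topologically_stable f x.
Proof.
  intros HX Hc Hme Hsh eps Heps.
  set (e := Rmin eps (c / 2)).
  assert (He : 0 < e) by (apply Rmin_glb_lt; lra).
  assert (He1 : e <= eps) by apply Rmin_l.
  assert (He2 : e <= c / 2) by apply Rmin_r.
  destruct (Hsh e He) as [del [Hdel Hs]].
  exists (del / 2). split; [lra|]. intros g Hg.
  destruct (semiconjugacy_of_shadowing f g (fun z => z) x x c e 0 del HX Hme Hs)
    as [h [Hcont [Hconj Hclose]]]; auto; try lra.
  - intros a b. lra.
  - intro w. specialize (Hg w). lra.
  - exists h. split; [|split]; auto. intros z Hz. specialize (Hclose z Hz). lra.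
Qed.

Lemma minimally_expansive_shadowable_GH_stable
  {X : MetricSpace} (f : Homeo X) (x : X) (c : R) :
  compact_space X -> 0 < c ->
  (forall p, ball x c p -> expansive_on f (closure (orbit f p)) c) ->
  shadowable f x -> GH_stable f x.
Proof.
  intros HX Hc Hme Hsh eps Heps.
  set (e := Rmin (eps / 2) (c / 5)).
  assert (He : 0 < e) by (apply Rmin_glb_lt; lra).
  assert (He1 : e <= eps / 2) by apply Rmin_l.
  assert (He2 : e <= c / 5) by apply Rmin_r.
  destruct (Hsh e He) as [del [Hdel Hs]].
  exists (Rmin del e). split; [now apply Rmin_glb_lt|].
  intros Y g _ [d' [[Hpos [i [j [_ [Hj [_ Hjg]]]]]] Hlt]].
  pose proof (Rmin_l del e). pose proof (Rmin_r del e).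
  exists j. split; [apply (isometry_approx_mono j d'); auto; lra|].
  intros y Hy.
  destruct (semiconjugacy_of_shadowing f g j x y c e d' del HX Hme Hs)
    as [h [Hcont [Hconj Hclose]]]; auto; try lra.
  - now apply isometry_approx_dist_le.
  - intro w. rewrite dist_sym. pose proof (dC0_lt_pointwise _ _ _ Hjg w). lra.
  - exists h. split; [|split]; auto. intros z Hz. specialize (Hclose z Hz). lra.
Qed.

Theorem theorem2p7 (X : MetricSpace) (f : Homeo X) (x : X) :
  compact_space X ->
  minimally_expansive f x -> shadowable f x ->
  topologically_stable f x /\ GH_stable f x.
Proof.
  intros HX [c [Hc Hme]] Hsh. split.
  - now apply (minimally_expansive_shadowable_topologically_stable f x c).
  - now apply (minimally_expansive_shadowable_GH_stable f x c).
Qed.
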